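(* Let $A$ be a $2n\times 2n$ real symmetric positive definite matrix with $AJ = JA$, and fix $\xi\in\{c,w,h\}$. Then every $2n\times 2n$ real symmetric positive definite matrix $B$ with $d(B) = \Delta_\xi(A)^\uparrow$ lies in the convex hull of the symplectic orbit of $A$, i.e. $B = \sum_{j=1}^k p_j M_j^TAM_j$ for some $M_1,\dots,M_k\in\operatorname{Sp}(2n)$ and some probability vector $(p_1,\dots,p_k)$. In particular, $\operatorname{diag}(\Delta_\xi(A))\oplus\operatorname{diag}(\Delta_\xi(A))$ lies in the convex hull of the symplectic orbit of $A$.
   Context: Let $J = \begin{bmatrix} 0 & I_n \\ -I_n & 0\end{bmatrix}$; $\operatorname{Sp}(2n)$ is the group of real $2n\times 2n$ matrices $M$ with $M^TJM=J$. For a real symmetric positive definite $2n\times 2n$ matrix $A$, Williamson's theorem gives $M\in\operatorname{Sp}(2n)$ with $M^TAM = D\oplus D$, $D$ a positive diagonal $n\times n$ matrix unique up to permutation; its diagonal entries are the symplectic eigenvalues of $A$ and $d(A)$ denotes the vector of them in non-decreasing order. For $x\in\mathbb{R}^n$, $x^\uparrow$ is $x$ rearranged in non-decreasing order. Write $A = \begin{bmatrix} A_{11} & A_{12}\\ A_{12}^T & A_{22}\end{bmatrix}$ with $n\times n$ blocks, and let $\Delta_{11},\Delta_{12},\Delta_{22}\in\mathbb{R}^n$ be the vectors of diagonal entries of $A_{11},A_{12},A_{22}$. With all operations entrywise, define $\Delta_c(A) = \frac{\Delta_{11}+\Delta_{22}}{2}$, $\Delta_h(A) = \sqrt{\frac{\Delta_{11}^2+\Delta_{22}^2}{2}}$,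 $\Delta_w(A) = \sqrt{\frac{\Delta_{11}^2+\Delta_{22}^2+2\Delta_{12}^2}{2}}$. For a vector $v$, $\operatorname{diag}(v)$ is the diagonal matrix with diagonal $v$. *)

From HB Require Import structures.
From mathcomp Require Import all_boot all_order all_algebra.
From mathcomp Require Import reals.
Set Implicit Arguments. Unset Strict Implicit. Unset Printing Implicit Defensive.
Import Order.TTheory GRing.Theory Num.Theory.
Local Open Scope ring_scope.

Section Defs.
Variable R : realType.
Variable n : nat.

Definition Jmx : 'M[R]_(n + n) := block_mx 0 1%:M (- 1%:M) 0.

Definition symplectic (M : 'M[R]_(n + n)) : Prop := M^T *m Jmx *m M = Jmx.

Definition posdef (A : 'M[R]_(n + n)) : Prop :=
  A^T = A /\ forall x : 'cV[R]_(n + n), x != 0 -> 0 < (x^T *m A *m x) 0 0.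

Definition dsum (v : 'rV[R]_n) : 'M[R]_(n + n) :=
  block_mx (diag_mx v) 0 0 (diag_mx v).

Definition nondecreasing_vec (v : 'rV[R]_n) : Prop :=
  forall i j : 'I_n, (i <= j)%N -> v 0 i <= v 0 j.

(* "d(B) = v": v is the non-decreasingly ordered vector of symplectic
   eigenvalues of B, i.e. v is non-decreasing and B has a Williamson
   normal form M^T B M = diag(v) (+) diag(v) with M symplectic. *)
Definition symp_eig_eq (B : 'M[R]_(n + n)) (v : 'rV[R]_n) : Prop :=
  nondecreasing_vec v /\
  exists M : 'M[R]_(n + n), symplectic M /\ M^T *m B *m M = dsum v.

Definition sort_up (x : 'rV[R]_n) : 'rV[R]_n :=
  \row_(i < n) nth 0 (sort <=%R [seq x 0 j | j <- enum 'I_n]) i.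

Definition Delta11 (A : 'M[R]_(n + n)) : 'rV[R]_n :=
  \row_(i < n) A (lshift n i) (lshift n i).
Definition Delta12 (A : 'M[R]_(n + n)) : 'rV[R]_n :=
  \row_(i < n) A (lshift n i) (rshift n i).
Definition Delta22 (A : 'M[R]_(n + n)) : 'rV[R]_n :=
  \row_(i < n) A (rshift n i) (rshift n i).

Inductive xi_kind := Xi_c | Xi_w | Xi_h.

Definition Delta (k : xi_kind) (A : 'M[R]_(n + n)) : 'rV[R]_n :=
  let a := Delta11 A in let b := Delta12 A in let c := Delta22 A in
  match k with
  | Xi_c => \row_(i < n) ((a 0 i + c 0 i) / 2)
  | Xi_h => \row_(i < n) Num.sqrt ((a 0 i ^+ 2 + c 0 i ^+ 2) / 2)
  | Xi_w => \row_(i < n) Num.sqrt ((a 0 i ^+ 2 + c 0 i ^+ 2 + 2 * b 0 i ^+ 2) / 2)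
  end.

Definition in_symp_orbit_hull (A B : 'M[R]_(n + n)) : Prop :=
  exists (k : nat) (p : 'I_k -> R) (Ms : 'I_k -> 'M[R]_(n + n)),
    (forall j, 0 <= p j) /\ \sum_(j < k) p j = 1 /\
    (forall j, symplectic (Ms j)) /\
    B = \sum_(j < k) p j *: ((Ms j)^T *m A *m Ms j).

End Defs.

From HB Require Import structures.
From mathcomp Require Import all_boot all_order all_algebra fingroup perm.
From mathcomp Require Import reals ring.
Set Implicit Arguments. Unset Strict Implicit. Unset Printing Implicit Defensive.
Import Order.TTheory GRing.Theory Num.Theory.
Local Open Scope ring_scope.

(* Since [A] commutes with [J] and is symmetric, it has the form
   [[P, Q], [-Q, P]] with [Q] skew-symmetric, so [Delta12 A = 0] and
   [Delta11 A = Delta22 A =: a]; hence all three vectors [Delta xi A] equal [a].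
   The diagonal sign matrices [diag(s) (+) diag(s)], [s] in {1,-1}^n, are
   symplectic, and averaging [S^T A S] over all of them kills every entry
   [A i j] whose indices differ mod [n], leaving exactly [diag a (+) diag a].
   A matrix [B] with [d(B) = a^uparrow] is congruent to [diag a (+) diag a]
   through a Williamson matrix and a block permutation [diag(P, P)], both
   symplectic, and the hull of the orbit is stable under symplectic
   congruence. *)

Section SignVectors.
Variables (R : numDomainType) (I : finType).
Local Notation signs := {ffun I -> bool}.

Definition sign (s : signs) (x : I) : R := if s x then 1 else -1.

Lemma sign_sqr s x : sign s x * sign s x = 1.
Proof. by rewrite /sign; case: (s x); rewrite ?mulr1 ?mulrNN ?mulr1. Qed.

Definition flip_sign (a : I) (s : signs) : signs :=
  [ffun x => if x == a then ~~ s x else s x].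

Lemma flip_signK a : involutive (flip_sign a).
Proof. by move=> s; apply/ffunP => x; rewrite !ffunE; case: eqP; rewrite ?negbK. Qed.

Lemma sum_sign_mul x y :
  \sum_(s : signs) sign s x * sign s y = if x == y then #|signs|%:R else 0.
Proof.
case: eqP => [<-|/eqP neq_xy].
  by rewrite (eq_bigr (fun=> 1)) ?sumr_const // => s _; rewrite sign_sqr.
set S := \sum_s _.
(* Flipping the sign at [x] is a bijection of [signs] that negates each term. *)
have S_opp : S = - S.
  rewrite {1}/S (reindex_inj (inv_inj (flip_signK x))) /= -sumrN.
  apply: eq_bigr => s _; rewrite /sign !ffunE eqxx eq_sym (negbTE neq_xy).
  by case: (s x); rewrite /= ?mulNr ?opprK.
have : S *+ 2 == 0 by rewrite mulr2n {1}S_opp addNr.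
by rewrite mulrn_eq0 => /eqP.
Qed.

End SignVectors.

Section Symplectic.
Variables (R : realType) (n : nat).
Local Notation M := 'M[R]_(n + n).
Local Notation J := (Jmx R n).

Lemma symplectic_mul (X Y : M) : symplectic X -> symplectic Y -> symplectic (X *m Y).
Proof.
rewrite /symplectic => sX sY.
by rewrite trmx_mul -[RHS]sY -[in RHS]sX !mulmxA.
Qed.

Lemma Jmx_sqr : J *m J = - 1%:M.
Proof.
rewrite /Jmx mulmx_block !(mulmx0, mul0mx, mulmx1, mul1mx, addr0, add0r).
by rewrite -!scaleN1r scalar_mx_block scale_block_mx scaler0 -scalemx1.
Qed.

Lemma Jmx_unit : J \in unitmx.
Proof.
have JNJ : J *m (- J) = 1%:M by rewrite mulmxN Jmx_sqr opprK.
by case: (mulmx1_unit JNJ).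
Qed.

Lemma symplectic_unit (X : M) : symplectic X -> X \in unitmx.
Proof. by move=> sX; have := Jmx_unit; rewrite -{1}sX !unitmx_mul => /andP[]. Qed.

Lemma symplectic_inv (X : M) : symplectic X -> symplectic (invmx X).
Proof.
move=> sX; have uX := symplectic_unit sX.
rewrite /symplectic -{1}sX -!mulmxA mulmxV // mulmx1.
by rewrite mulmxA -trmx_mul mulmxV // trmx1 mul1mx.
Qed.

Lemma symp_orbit_hull_fin (T : finType) (A : M) (p : T -> R) (Ms : T -> M) :
  (forall x, 0 <= p x) -> \sum_x p x = 1 -> (forall x, symplectic (Ms x)) ->
  in_symp_orbit_hull A (\sum_x p x *: ((Ms x)^T *m A *m Ms x)).
Proof.
move=> p_ge0 p_sum1 sMs.
exists #|T|, (fun j => p (enum_val j)), (fun j => Ms (enum_val j)).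
have sum_enum (V : nmodType) (F : T -> V) : \sum_x F x = \sum_(j < #|T|) F (enum_val j).
  by rewrite -(big_enum_val F); apply: eq_bigl => x; rewrite inE.
by split=> //; split; [rewrite -sum_enum | split=> //; exact: sum_enum].
Qed.

Lemma symp_orbit_hull_congr (A B N : M) :
  in_symp_orbit_hull A B -> symplectic N -> in_symp_orbit_hull A (N^T *m B *m N).
Proof.
move=> [k [p [Ms [p_ge0 [p_sum1 [sMs ->]]]]]] sN.
exists k, p, (fun j => Ms j *m N); do 3!split=> //.
  by move=> j; apply: symplectic_mul.
rewrite mulmx_sumr mulmx_suml; apply: eq_bigr => j _.
by rewrite -scalemxAr -scalemxAl trmx_mul !mulmxA.
Qed.

End Symplectic.

Section SignAveraging.
Variables (R : realType) (n : nat).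
Local Notation M := 'M[R]_(n + n).
Local Notation J := (Jmx R n).
Local Notation signs := {ffun 'I_n -> bool}.

Definition blk (k : 'I_(n + n)) : 'I_n :=
  match split k with inl i => i | inr i => i end.

Lemma blk_lshift i : blk (lshift n i) = i.
Proof. by rewrite /blk (unsplitK (inl _ i)). Qed.

Lemma blk_rshift i : blk (rshift n i) = i.
Proof. by rewrite /blk (unsplitK (inr _ i)). Qed.

Definition sign_mx (s : signs) : M := diag_mx (\row_k sign R s (blk k)).

Lemma sign_mx_congrE s (X : M) i j :
  ((sign_mx s)^T *m X *m sign_mx s) i j = sign R s (blk i) * X i j * sign R s (blk j).
Proof. by rewrite /sign_mx tr_diag_mx mul_mx_diag mul_diag_mx !mxE. Qed.

Lemma sign_mx_symplectic s : symplectic (sign_mx s).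
Proof.
rewrite /symplectic; apply/matrixP => i j; rewrite sign_mx_congrE /Jmx.
case: (split_ordP i) => {}i ->; case: (split_ordP j) => {}j ->;
  rewrite ?blk_lshift ?blk_rshift ?block_mxEul ?block_mxEur ?block_mxEdl
    ?block_mxEdr !mxE ?mulr0 ?mul0r //;
  case: eqP => [->|]; rewrite ?mulr1n ?mulr0n ?oppr0 ?mulr0 ?mul0r //.
  by rewrite mulr1 sign_sqr.
by rewrite mulrN1 mulNr sign_sqr.
Qed.

Lemma card_signs_neq0 : #|signs|%:R != 0 :> R.
Proof. by rewrite pnatr_eq0 -lt0n; apply/card_gt0P; exists [ffun=> true]. Qed.

Definition sign_avg (X : M) : M :=
  \sum_(s : signs) #|signs|%:R^-1 *: ((sign_mx s)^T *m X *m sign_mx s).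

Lemma sign_avg_in_hull (A : M) : in_symp_orbit_hull A (sign_avg A).
Proof.
apply: symp_orbit_hull_fin => [s||]; last exact: sign_mx_symplectic.
  by rewrite invr_ge0 ler0n.
by rewrite sumr_const -[_ *+ _]mulr_natr; exact: mulVf card_signs_neq0.
Qed.

Lemma sign_avgE (X : M) :
  sign_avg X = \matrix_(i, j) (if blk i == blk j then X i j else 0).
Proof.
apply/matrixP => i j; rewrite summxE !mxE.
under eq_bigr do rewrite mxE sign_mx_congrE mulrA (mulrC _ (X i j)) -!mulrA.
rewrite -!mulr_sumr sum_sign_mul.
by case: eqP; rewrite ?mulr0 // mulrCA mulVf ?mulr1 // card_signs_neq0.
Qed.

Lemma commJ_blocks (A : M) : A *m J = J *m A ->
  drsubmx A = ulsubmx A /\ dlsubmx A = - ursubmx A.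
Proof.
rewrite -{1 2}[A]submxK /Jmx !mulmx_block.
rewrite !(mulmx0, mul0mx, mulmx1, mul1mx, mulmxN, mulNmx, addr0, add0r).
by case/eq_block_mx => _ -> _ ->.
Qed.

Lemma symmetric_commJ_entries (A : M) : A^T = A -> A *m J = J *m A ->
  forall i, [/\ A (rshift n i) (rshift n i) = A (lshift n i) (lshift n i),
                A (lshift n i) (rshift n i) = 0 & A (rshift n i) (lshift n i) = 0].
Proof.
move=> symA /commJ_blocks[/matrixP dr_ul /matrixP dl_ur] i.
have A_sym k l : A l k = A k l by rewrite -{1}symA mxE.
have ur_dl : A (lshift n i) (rshift n i) = - A (rshift n i) (lshift n i).
  by have := dl_ur i i; rewrite !mxE => ->; rewrite opprK.
have ur0 : A (lshift n i) (rshift n i) = 0.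
  have : A (lshift n i) (rshift n i) *+ 2 == 0 by rewrite mulr2n {2}ur_dl A_sym addrN.
  by rewrite mulrn_eq0 => /eqP.
split=> //; first by have := dr_ul i i; rewrite !mxE.
by rewrite A_sym.
Qed.

Lemma sign_avg_commJ (A : M) : A^T = A -> A *m J = J *m A ->
  sign_avg A = dsum (Delta11 A).
Proof.
move=> symA commA; rewrite sign_avgE; apply/matrixP => i j; rewrite /dsum mxE.
case: (split_ordP i) => {}i ->; case: (split_ordP j) => {}j ->;
  rewrite ?blk_lshift ?blk_rshift ?block_mxEul ?block_mxEur ?block_mxEdl
    ?block_mxEdr !mxE; case: eqP => [<-|]; rewrite ?mulr1n ?mulr0n //;
  by case: (symmetric_commJ_entries symA commA i).
Qed.

End SignAveraging.

Section DiagonalForm.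
Variables (R : realType) (n : nat).
Local Notation M := 'M[R]_(n + n).
Local Notation J := (Jmx R n).

Lemma posdef_diag_gt0 (A : M) k : posdef A -> 0 < A k k.
Proof.
case=> _ /(_ (delta_mx k 0)); rewrite trmx_delta -rowE -colE !mxE; apply.
by apply/negP => /eqP/matrixP/(_ k 0); rewrite !mxE !eqxx => /eqP; rewrite oner_eq0.
Qed.

Lemma Delta_symmetric_commJ (A : M) xi : posdef A -> A *m J = J *m A ->
  Delta xi A = Delta11 A.
Proof.
move=> posA commA; apply/matrixP => z i; rewrite (ord1 z).
have a_gt0 := posdef_diag_gt0 (lshift n i) posA.
have [dr_ul ur0 _] := symmetric_commJ_entries posA.1 commA i.
set a := A (lshift n i) (lshift n i) in a_gt0 dr_ul *.
have sqrt_sqr : Num.sqrt (a ^+ 2) = a by rewrite sqrtr_sqr ger0_norm // ltW.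
case: xi; rewrite /Delta !mxE dr_ul ?ur0 -/a; first by field.
all: by rewrite -[RHS]sqrt_sqr; congr Num.sqrt; field.
Qed.

Definition blk_perm_mx (s : 'S_n) : M := block_mx (perm_mx s) 0 0 (perm_mx s).

Lemma blk_perm_mx_symplectic s : symplectic (blk_perm_mx s).
Proof.
rewrite /symplectic /blk_perm_mx /Jmx tr_block_mx !trmx0 !mulmx_block.
rewrite !(mulmx0, mul0mx, mulmx1, mul1mx, mulmxN, mulNmx, addr0, add0r).
by rewrite tr_perm_mx -perm_mxM mulVg perm_mx1.
Qed.

Lemma blk_perm_mx_congr_dsum s (v : 'rV[R]_n) :
  (blk_perm_mx s)^T *m dsum v *m blk_perm_mx s = dsum (\row_i v 0 (s^-1 i)%g).
Proof.
rewrite /dsum /blk_perm_mx tr_block_mx !trmx0 !mulmx_block.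
rewrite !(mulmx0, mul0mx, mulmx1, mul1mx, mulmxN, mulNmx, addr0, add0r).
suff -> : (perm_mx s)^T *m diag_mx v *m perm_mx s = diag_mx (\row_i v 0 (s^-1 i)%g) by [].
rewrite tr_perm_mx -row_permE -[s in perm_mx s](invgK s) -col_permE.
by apply/matrixP => i j; rewrite !mxE (inj_eq perm_inj).
Qed.

Lemma sort_up_perm (v : 'rV[R]_n) : exists s : 'S_n, sort_up v = \row_i v 0 (s i).
Proof.
have : perm_eq (sort <=%R [seq v 0 j | j <- enum 'I_n]) [tuple v 0 j | j < n].
  by rewrite perm_sort.
case/tuple_permP => s sort_v; exists s.
by apply/matrixP => z i; rewrite !mxE sort_v nth_mktuple tnth_mktuple.
Qed.

Lemma symp_orbit_hull_sort_up (A : M) (v : 'rV[R]_n) :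
  in_symp_orbit_hull A (dsum v) -> in_symp_orbit_hull A (dsum (sort_up v)).
Proof.
move=> hull_v; have [s ->] := sort_up_perm v.
have -> : \row_i v 0 (s i) = \row_i v 0 ((s^-1)^-1 i)%g.
  by apply/matrixP => z i; rewrite !mxE invgK.
rewrite -blk_perm_mx_congr_dsum.
exact: symp_orbit_hull_congr (blk_perm_mx_symplectic _).
Qed.

Lemma symp_orbit_hull_williamson (A B D N : M) : in_symp_orbit_hull A D ->
  symplectic N -> N^T *m B *m N = D -> in_symp_orbit_hull A B.
Proof.
move=> hull_D sN NBN; have uN := symplectic_unit sN.
have -> : B = (invmx N)^T *m D *m invmx N.
  by rewrite -NBN !mulmxA -trmx_mul mulmxV // trmx1 mul1mx -mulmxA mulmxV // mulmx1.
exact: symp_orbit_hull_congr (symplectic_inv sN).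
Qed.

End DiagonalForm.

Theorem corollary3p5 (R : realType) (n : nat) (A : 'M[R]_(n + n))
    (xi : xi_kind) :
  posdef A -> A *m Jmx R n = Jmx R n *m A ->
  (forall B : 'M[R]_(n + n),
      posdef B -> symp_eig_eq B (sort_up (Delta xi A)) ->
      in_symp_orbit_hull A B) /\
  in_symp_orbit_hull A (dsum (Delta xi A)).
Proof.
move=> posA commA; rewrite Delta_symmetric_commJ //.
have hull_a : in_symp_orbit_hull A (dsum (Delta11 A)).
  by rewrite -sign_avg_commJ //; [exact: sign_avg_in_hull | exact: posA.1].
split=> // B _ [_ [N [sN NBN]]].
exact: symp_orbit_hull_williamson (symp_orbit_hull_sort_up hull_a) sN NBN.
Qed.
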